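(* Let $D$ be an integer which is not a perfect square, let $p\neq 2$ be a prime with $p\mid D$ and $p^2\nmid D$, and let $l\geq 1$. Let $A,B\in\mathbb{Z}$ be such that $p^{l+1}$ divides none of $A$, $B$, $A-B$, $G(A,B)$. Then $S^{(D;A,B)}(\mathbb{Q}_p)\neq\emptyset$ if and only if the pair $(A \bmod p^{8l+1}, B \bmod p^{8l+1})$ lies in $\mathcal{R}_l(p)$.
   Context: $S^{(D;A,B)}\subset\mathbb{P}^4_{\mathbb{Q}}$ is defined by $Q_1(\mathbf{t})=Q_2(\mathbf{t})=0$ where $Q_1(\mathbf{t})=t_2^2-Dt_3^2-t_0t_1$ and $Q_2(\mathbf{t})=t_2^2-Dt_4^2-(t_0+At_1)(t_0+Bt_1)$. $G(A,B)=A^2-2AB+B^2-2A-2B+1$. For a prime $p$ and $l\geq 1$, $\mathcal{R}_l(p)$ is the set of pairs of residue classes $(A,B)$ modulo $p^{8l+1}$ such that $p^{l+1}$ divides none of $A,B,A-B,G(A,B)$ and the congruences $Q_1(\mathbf{t})\equiv Q_2(\mathbf{t})\equiv 0\pmod{p^{8l+1}}$ have a solution $\mathbf{t}\in(\mathbb{Z}/p^{8l+1}\mathbb{Z})^5$ whose components are not all divisible by $p$. *)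

From HB Require Import structures.
From mathcomp Require Import all_boot all_order all_algebra.
Set Implicit Arguments. Unset Strict Implicit. Unset Printing Implicit Defensive.
Import Order.TTheory GRing.Theory Num.Theory.
Local Open Scope ring_scope.

(* The two quadrics defining S^(D;A,B) in P^4, evaluated on t : 'I_5 -> R
   (t 0 = t_0, ..., t 4 = t_4), over any commutative ring R. *)
Definition Q1 {R : comRingType} (D : R) (t : 'I_5 -> R) : R :=
  t (inord 2) ^+ 2 - D * t (inord 3) ^+ 2 - t (inord 0) * t (inord 1).
Definition Q2 {R : comRingType} (D A B : R) (t : 'I_5 -> R) : R :=
  t (inord 2) ^+ 2 - D * t (inord 4) ^+ 2
  - (t (inord 0) + A * t (inord 1)) * (t (inord 0) + B * t (inord 1)).

Definition Gpoly (A B : int) : int :=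
  A ^+ 2 - 2 * A * B + B ^+ 2 - 2 * A - 2 * B + 1.

(* p-adic integers Z_p as the inverse limit of Z/p^k Z: coherent sequences
   of integer representatives x k of residues modulo p^k. *)
Definition padic_coherent (p : nat) (x : nat -> int) : Prop :=
  forall k : nat, (x k.+1 == x k %[mod (p ^ k)%:Z])%Z.

Definition padic_eq (p : nat) (x y : nat -> int) : Prop :=
  forall k : nat, (x k == y k %[mod (p ^ k)%:Z])%Z.

(* S^(D;A,B)(Q_p) is nonempty: there is a nonzero vector t in Q_p^5 with
   Q1(t) = Q2(t) = 0.  After clearing denominators (homogeneity) this is the
   same as a nonzero vector in Z_p^5; Z_p is modelled as coherent sequences,
   and ring operations are computed componentwise on representatives. *)
Definition S_has_Qp_point (p : nat) (D A B : int) : Prop :=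
  exists t : 'I_5 -> nat -> int,
    [/\ forall i, padic_coherent p (t i),
        exists i, ~ padic_eq p (t i) (fun _ => 0),
        padic_eq p (fun k => Q1 D (fun i => t i k)) (fun _ => 0)
      & padic_eq p (fun k => Q2 D A B (fun i => t i k)) (fun _ => 0)].

(* Membership of the pair of residue classes (A mod p^(8l+1), B mod p^(8l+1))
   in R_l(p), given by representatives A B; the condition only depends on
   the classes since l+1 <= 8l+1. *)
Definition in_Rl (D : int) (p l : nat) (A B : int) : Prop :=
  let M := (p ^ (8 * l + 1))%:Z in
  let q := (p ^ l.+1)%:Z in
  [/\ ~~ (q %| A)%Z, ~~ (q %| B)%Z, ~~ (q %| A - B)%Z, ~~ (q %| Gpoly A B)%Z
    & exists t : 'I_5 -> int,
        [/\ (M %| Q1 D t)%Z, (M %| Q2 D A B t)%Z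
          & exists i, ~~ (p%:Z %| t i)%Z]].

(* A Q_p-point of S, scaled to be primitive in Z_p^5, reduces to a primitive
   solution modulo every power of p.  Conversely, elementary valuation estimates
   on the five 2x2 minors of the Jacobian of (Q1, Q2) show that, as soon as p^(l+1)
   divides none of A, B, A - B, G(A, B), every primitive solution modulo
   p^(8l+1) has a minor of valuation e <= 4l.  Since 8l+1 >= 2e+1, Hensel's lemma
   for a pair of quadratic forms (Newton steps solved by Cramer's rule) lifts it
   to a Z_p-point.  All the conditions only depend on A, B modulo p^(8l+1). *)

From mathcomp Require Import all_boot all_order all_algebra.
From mathcomp Require Import ring zify.
From Stdlib Require Import Classical FunctionalExtensionality.
Import GRing.Theory Num.Theory.
Set Implicit Arguments. Unset Strict Implicit.
Local Open Scope ring_scope.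

Definition logz (p : nat) (x : int) : nat := logn p `|x|.

Lemma dvdz_exp_leq (p j k : nat) (x : int) :
  (j <= k)%N -> ((p ^ k)%:Z %| x)%Z -> ((p ^ j)%:Z %| x)%Z.
Proof. by move=> jk; apply: dvdz_trans; rewrite dvdzE !absz_nat dvdn_exp2l. Qed.

Lemma ndvdz_neq0 (d x : int) : ~~ (d %| x)%Z -> x != 0.
Proof. by apply: contraNneq => ->; rewrite dvdz0. Qed.

Lemma Posz_expnS (p k : nat) : (p ^ k.+1)%:Z = p%:Z * (p ^ k)%:Z.
Proof. by rewrite expnS PoszM. Qed.

Section Valuation.

Variable p : nat.
Hypothesis p_pr : prime p.

Lemma dvdz_exp_logz k x : x != 0 -> ((p ^ k)%:Z %| x)%Z = (k <= logz p x)%N.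
Proof. by move=> x0; rewrite dvdzE absz_nat pfactor_dvdn // absz_gt0. Qed.

Lemma logzM x y : x != 0 -> y != 0 -> logz p (x * y) = (logz p x + logz p y)%N.
Proof. by move=> x0 y0; rewrite /logz abszM lognM // absz_gt0. Qed.

Lemma logzX x k : logz p (x ^+ k) = (k * logz p x)%N.
Proof. by rewrite /logz abszX lognX. Qed.

Lemma logz_coprime x : ~~ (p%:Z %| x)%Z -> logz p x = 0%N.
Proof. by move=> px; apply: logn_coprime; rewrite prime_coprime // -(absz_nat p). Qed.

Lemma logz_lt k x : x != 0 -> ~~ ((p ^ k)%:Z %| x)%Z -> (logz p x < k)%N.
Proof. by move=> x0; rewrite dvdz_exp_logz // -ltnNge. Qed.

Lemma Euclid_dvdzM x y : (p%:Z %| x * y)%Z = (p%:Z %| x)%Z || (p%:Z %| y)%Z.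
Proof. by rewrite !dvdzE abszM absz_nat Euclid_dvdM. Qed.

Lemma Gauss_dvdz_exp k x y :
  ~~ (p%:Z %| y)%Z -> ((p ^ k)%:Z %| x * y)%Z = ((p ^ k)%:Z %| x)%Z.
Proof.
move=> py; apply: Gauss_dvdzl.
by rewrite coprimezE absz_nat coprimeXl // prime_coprime // -(absz_nat p).
Qed.

Lemma logzDr k x z :
  x != 0 -> (logz p x < k)%N -> ((p ^ k)%:Z %| z)%Z -> logz p (x + z) = logz p x.
Proof.
move=> x0 xk zk; set v := logz p x.
have vz : ((p ^ v.+1)%:Z %| z)%Z by apply: dvdz_exp_leq zk.
have xv : ((p ^ v)%:Z %| x)%Z by rewrite dvdz_exp_logz.
have xv1 : ~~ ((p ^ v.+1)%:Z %| x)%Z by rewrite dvdz_exp_logz // ltnn.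
have xzv1 : ~~ ((p ^ v.+1)%:Z %| x + z)%Z by rewrite rpredDr.
have xz0 := ndvdz_neq0 xzv1.
have xzv : ((p ^ v)%:Z %| x + z)%Z by rewrite rpredD // (dvdz_exp_leq (leqnSn v)).
have := logz_lt xz0 xzv1; rewrite dvdz_exp_logz // in xzv; lia.
Qed.

End Valuation.

Lemma exact_power_inverse (p e : nat) (m : int) : prime p ->
  ((p ^ e)%:Z %| m)%Z -> ~~ ((p ^ e.+1)%:Z %| m)%Z ->
  exists w, ((p ^ e.+1)%:Z %| w * m - (p ^ e)%:Z)%Z.
Proof.
move=> p_pr pe_m pe1_m; set m' := (m %/ (p ^ e)%:Z)%Z.
have mE : m = m' * (p ^ e)%:Z by rewrite divzK.
have p_m' : ~~ (p%:Z %| m')%Z.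
  by apply: contra pe1_m => pm'; rewrite mE Posz_expnS dvdz_mul.
have [u [w uw]] := Bezoutz p%:Z m'.
have g1 : gcdz p%:Z m' = 1.
  by apply/eqP; rewrite -/(coprimez _ _) coprimezE absz_nat prime_coprime // -(absz_nat p).
rewrite g1 in uw.
exists w; rewrite mE Posz_expnS.
have -> : w * (m' * (p ^ e)%:Z) - (p ^ e)%:Z = (w * m' - 1) * (p ^ e)%:Z by ring.
have -> : w * m' - 1 = - u * p%:Z by rewrite -uw; ring.
by rewrite dvdz_mul // dvdz_mull.
Qed.

Definition bilinear_form (n : nat) (b : ('I_n -> int) -> ('I_n -> int) -> int) :=
  [/\ forall t u h, b (fun i => t i + u i) h = b t h + b u h,
      forall a t h, b (fun i => a * t i) h = a * b t h,
      forall t h k, b t (fun i => h i + k i) = b t h + b t k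
    & forall a t h, b t (fun i => a * h i) = a * b t h].

Definition qform n (b : ('I_n -> int) -> ('I_n -> int) -> int) t := b t t.

Definition delta n (c : 'I_n) : 'I_n -> int := fun i => (i == c)%:R.

Definition jac n (b : ('I_n -> int) -> ('I_n -> int) -> int) t c :=
  b t (delta c) + b (delta c) t.

Section BilinearForm.

Variables (n : nat) (b : ('I_n -> int) -> ('I_n -> int) -> int).
Hypothesis b_bil : bilinear_form b.

Lemma qform_shift t s h :
  qform b (fun i => t i + s * h i) = qform b t + s * (b t h + b h t) + s ^+ 2 * qform b h.
Proof.
by case: b_bil => addl scalel addr scaler; rewrite /qform addl !addr !scalel !scaler; ring.
Qed.

Lemma qformZ s h : qform b (fun i => s * h i) = s ^+ 2 * qform b h.
Proof. by case: b_bil => _ scalel _ scaler; rewrite /qform scalel scaler; ring. Qed.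

Lemma polar_delta t x y c1 c2 (h := fun i => x * delta c1 i + y * delta c2 i) :
  b t h + b h t = x * jac b t c1 + y * jac b t c2.
Proof.
by case: b_bil => addl scalel addr scaler; rewrite /h /jac addl addr !scalel !scaler; ring.
Qed.

Lemma jac_shift t s u c : jac b (fun i => t i + s * u i) c = jac b t c + s * jac b u c.
Proof. by case: b_bil => addl scalel addr scaler; rewrite /jac addl addr scalel scaler; ring. Qed.

End BilinearForm.

Lemma padic_coherent_dvd p (x : nat -> int) : padic_coherent p x ->
  forall m d, ((p ^ m)%:Z %| x (m + d)%N - x m)%Z.
Proof.
move=> coh m; elim=> [|d IHd]; first by rewrite addn0 subrr dvdz0.
rewrite addnS (_ : x _ - _ = (x (m + d).+1 - x (m + d)%N) + (x (m + d)%N - x m)); last by ring.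
by rewrite rpredD // (dvdz_exp_leq (leq_addr d m)) // -eqz_mod_dvd coh.
Qed.

Lemma padic_first_nonzero_level n p (t : 'I_n -> nat -> int) :
  (exists i, ~ padic_eq p (t i) (fun _ => 0)) ->
  exists v i0, (forall i, ((p ^ v)%:Z %| t i v)%Z) /\ ~~ ((p ^ v.+1)%:Z %| t i0 v.+1)%Z.
Proof.
move=> [i1 t_i1]; pose nonzero_at j := [exists i, ~~ ((p ^ j.+1)%:Z %| t i j.+1)%Z].
have [j t_j] : exists j, nonzero_at j.
  have [k /negP] := not_all_ex_not _ _ t_i1.
  rewrite eqz_mod_dvd subr0; case: k => [|j] pk; first by rewrite dvd1z in pk.
  by exists j; apply/existsP; exists i1.
case: (ex_minnP (ex_intro nonzero_at j t_j)) => v /existsP [i0 t_i0] v_min.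
exists v, i0; split=> // i.
case: v t_i0 v_min => [|j'] _ v_min; first by rewrite dvd1z.
apply/negPn/negP => pj_t.
suff /v_min : nonzero_at j' by rewrite ltnn.
by apply/existsP; exists i.
Qed.

Section QuadraticHensel.

Variables (n p : nat) (b1 b2 : ('I_n -> int) -> ('I_n -> int) -> int).
Hypotheses (p_pr : prime p) (b1_bil : bilinear_form b1) (b2_bil : bilinear_form b2).

Definition jac_minor t c1 c2 := jac b1 t c1 * jac b2 t c2 - jac b1 t c2 * jac b2 t c1.

Lemma jac_minor_congr (d : int) t t' c1 c2 :
  (forall i, (d %| t' i - t i)%Z) -> (d %| jac_minor t' c1 c2 - jac_minor t c1 c2)%Z.
Proof.
move=> tt'; pose u i := ((t' i - t i) %/ d)%Z.
have -> : t' = fun i => t i + d * u i.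
  by apply: functional_extensionality => i; rewrite /u mulrC divzK // addrC subrK.
rewrite /jac_minor !jac_shift //.
set a := jac b1 t c1; set a' := jac b1 t c2; set c := jac b2 t c1; set c' := jac b2 t c2.
set v := jac b1 u c1; set v' := jac b1 u c2; set z := jac b2 u c1; set z' := jac b2 u c2.
have -> : (a + d * v) * (c' + d * z') - (a' + d * v') * (c + d * z) - (a * c' - a' * c)
  = d * (a * z' + v * c' + d * v * z' - a' * z - v' * c - d * v' * z) by ring.
exact: dvdz_mulr.
Qed.

Section Lifting.

Variables (T0 : 'I_n -> int) (N e : nat) (c1 c2 : 'I_n) (w : int).
Hypotheses (eN : (2 * e < N)%N)
  (pN_q1 : ((p ^ N)%:Z %| qform b1 T0)%Z) (pN_q2 : ((p ^ N)%:Z %| qform b2 T0)%Z)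
  (w_inv : ((p ^ e.+1)%:Z %| w * jac_minor T0 c1 c2 - (p ^ e)%:Z)%Z).

Lemma qform_lift_dvd b t k x y :
  bilinear_form b -> (2 * e < k)%N -> ((p ^ k)%:Z %| qform b t)%Z ->
  x * jac b t c1 + y * jac b t c2 = - (w * jac_minor t c1 c2) * (qform b t %/ (p ^ k)%:Z)%Z ->
  ((p ^ e.+1)%:Z %| w * jac_minor t c1 c2 - (p ^ e)%:Z)%Z ->
  ((p ^ k.+1)%:Z %|
     qform b (fun i => t i + (p ^ (k - e))%:Z * (x * delta c1 i + y * delta c2 i)))%Z.
Proof.
move=> b_bil ek pk_q cramer w_t; set s := (p ^ (k - e))%:Z.
have pkE : (p ^ k)%:Z = s * (p ^ e)%:Z by rewrite -PoszM -expnD subnK //; move: ek; clear; lia.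
have pk1E : (p ^ k.+1)%:Z = s * (p ^ e.+1)%:Z.
  by rewrite -PoszM -expnD; congr (_ ^ _)%:Z; move: ek; clear; lia.
rewrite qform_shift // polar_delta // cramer -{1}(divzK pk_q) pkE.
set q := (qform b t %/ _)%Z; set m := jac_minor t c1 c2.
rewrite (_ : q * _ + _ = s * (q * ((p ^ e)%:Z - w * m))); last by ring.
have pk1_s2 : ((p ^ k.+1)%:Z %| s ^+ 2)%Z.
  by rewrite /s expr2 -PoszM -expnD; apply: dvdz_exp_leq (dvdzz _); move: ek; clear; lia.
have pk1_lin : ((p ^ k.+1)%:Z %| s * (q * ((p ^ e)%:Z - w * m)))%Z.
  have s0 : s != 0 by rewrite /s eqz_nat -lt0n expn_gt0 prime_gt0.
  by rewrite pk1E dvdz_mul2l // dvdz_mull // -opprB rpredN.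
exact: rpredD pk1_lin (dvdz_mulr _ pk1_s2).
Qed.

(* [(x, y)] solves the linearised system by Cramer's rule, [w] standing for
   [p ^ e / jac_minor t c1 c2] modulo [p ^ e.+1]. *)
Definition hensel_step t k : 'I_n -> int :=
  let q1 := (qform b1 t %/ (p ^ k)%:Z)%Z in
  let q2 := (qform b2 t %/ (p ^ k)%:Z)%Z in
  let x := - w * (jac b2 t c2 * q1 - jac b1 t c2 * q2) in
  let y := - w * (jac b1 t c1 * q2 - jac b2 t c1 * q1) in
  fun i => t i + (p ^ (k - e))%:Z * (x * delta c1 i + y * delta c2 i).

Lemma hensel_step_spec t k :
  (2 * e < k)%N -> ((p ^ k)%:Z %| qform b1 t)%Z -> ((p ^ k)%:Z %| qform b2 t)%Z ->
  ((p ^ e.+1)%:Z %| w * jac_minor t c1 c2 - (p ^ e)%:Z)%Z ->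
  [/\ ((p ^ k.+1)%:Z %| qform b1 (hensel_step t k))%Z,
      ((p ^ k.+1)%:Z %| qform b2 (hensel_step t k))%Z
    & forall i, ((p ^ (k - e))%:Z %| hensel_step t k i - t i)%Z].
Proof.
move=> ek pk_q1 pk_q2 w_t; split.
- by apply: qform_lift_dvd => //; rewrite /jac_minor; ring.
- by apply: qform_lift_dvd => //; rewrite /jac_minor; ring.
- by move=> i; rewrite /hensel_step addrC addKr dvdz_mulr.
Qed.

Lemma w_inv_congr t : (forall i, ((p ^ e.+1)%:Z %| t i - T0 i)%Z) ->
  ((p ^ e.+1)%:Z %| w * jac_minor t c1 c2 - (p ^ e)%:Z)%Z.
Proof.
move=> t_T0; rewrite (_ : _ - _ = w * (jac_minor t c1 c2 - jac_minor T0 c1 c2)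
                                  + (w * jac_minor T0 c1 c2 - (p ^ e)%:Z)); last by ring.
by rewrite rpredD // dvdz_mull // jac_minor_congr.
Qed.

Fixpoint hensel_seq k : 'I_n -> int :=
  if k is k'.+1 then hensel_step (hensel_seq k') (N + k') else T0.

Lemma hensel_seq_spec k :
  [/\ ((p ^ (N + k))%:Z %| qform b1 (hensel_seq k))%Z,
      ((p ^ (N + k))%:Z %| qform b2 (hensel_seq k))%Z
    & forall i, ((p ^ e.+1)%:Z %| hensel_seq k i - T0 i)%Z].
Proof.
elim: k => [|k [pk_q1 pk_q2 sk_T0]]; first by rewrite addn0; split=> // i; rewrite subrr dvdz0.
have ek : (2 * e < N + k)%N by move: eN; clear; lia.
have [q1S q2S stepS] := hensel_step_spec ek pk_q1 pk_q2 (w_inv_congr sk_T0).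
rewrite addnS; split=> // i /=.
rewrite (_ : _ - _ = (hensel_step (hensel_seq k) (N + k) i - hensel_seq k i)
                     + (hensel_seq k i - T0 i)); last by ring.
by rewrite rpredD // (dvdz_exp_leq _ (stepS i)) //; move: ek; clear; lia.
Qed.

Lemma hensel_seq_succ k i : ((p ^ k)%:Z %| hensel_seq k.+1 i - hensel_seq k i)%Z.
Proof.
have [pk_q1 pk_q2 sk_T0] := hensel_seq_spec k.
have ek : (2 * e < N + k)%N by move: eN; clear; lia.
have [_ _ stepS] := hensel_step_spec ek pk_q1 pk_q2 (w_inv_congr sk_T0).
by apply: dvdz_exp_leq (stepS i); move: eN; clear; lia.
Qed.

End Lifting.

Lemma quadratic_hensel T0 N e c1 c2 :
  (2 * e < N)%N -> ((p ^ N)%:Z %| qform b1 T0)%Z -> ((p ^ N)%:Z %| qform b2 T0)%Z ->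
  ((p ^ e)%:Z %| jac_minor T0 c1 c2)%Z -> ~~ ((p ^ e.+1)%:Z %| jac_minor T0 c1 c2)%Z ->
  exists t : 'I_n -> nat -> int,
    [/\ forall i, padic_coherent p (t i),
        forall i, (p%:Z %| t i 1%N - T0 i)%Z,
        padic_eq p (fun k => qform b1 (fun i => t i k)) (fun _ => 0)
      & padic_eq p (fun k => qform b2 (fun i => t i k)) (fun _ => 0)].
Proof.
move=> eN pN_q1 pN_q2 pe_m pe1_m.
have [w w_inv] := exact_power_inverse p_pr pe_m pe1_m.
have spec := hensel_seq_spec eN pN_q1 pN_q2 w_inv.
exists (fun i k => hensel_seq T0 N e c1 c2 w k i); split.
- by move=> i k; rewrite eqz_mod_dvd hensel_seq_succ.
- by move=> i; have [_ _ /(_ i) /(dvdz_exp_leq (j := 1))] := spec 1%N; apply.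
- move=> k; rewrite eqz_mod_dvd subr0; have [+ _ _] := spec k.
  exact: dvdz_exp_leq (leq_addl N k).
- move=> k; rewrite eqz_mod_dvd subr0; have [_ + _] := spec k.
  exact: dvdz_exp_leq (leq_addl N k).
Qed.

Lemma qpoint_primitive_approx (t : 'I_n -> nat -> int) N :
  (forall i, padic_coherent p (t i)) -> (exists i, ~ padic_eq p (t i) (fun _ => 0)) ->
  padic_eq p (fun k => qform b1 (fun i => t i k)) (fun _ => 0) ->
  padic_eq p (fun k => qform b2 (fun i => t i k)) (fun _ => 0) ->
  exists u : 'I_n -> int,
    [/\ ((p ^ N)%:Z %| qform b1 u)%Z, ((p ^ N)%:Z %| qform b2 u)%Z
      & exists i, ~~ (p%:Z %| u i)%Z].
Proof.
move=> coh /padic_first_nonzero_level [v [i0 [pv_t t_i0]]] q1_0 q2_0.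
(* [u := p ^ -v * t . K] is primitive, and [K] absorbs the factor [p ^ 2v] of [qform b u]. *)
set K := (2 * v + N.+1)%N.
have pv_tK : forall i, ((p ^ v)%:Z %| t i K)%Z.
  move=> i; have := padic_coherent_dvd (coh i) v (v + N.+1).
  rewrite (_ : (v + (v + N.+1) = K)%N); last by rewrite /K; clear; lia.
  by rewrite -(rpredDr _ (pv_t i)) subrK.
pose u i := (t i K %/ (p ^ v)%:Z)%Z.
have tKE : (fun i => t i K) = fun i => (p ^ v)%:Z * u i.
  by apply: functional_extensionality => i; rewrite /u mulrC divzK.
have pKE : (p ^ K)%:Z = (p ^ v)%:Z ^+ 2 * (p ^ N.+1)%:Z.
  by rewrite expr2 -!PoszM -!expnD /K; congr (_ ^ _)%:Z; clear; lia.
have pv2 : (p ^ v)%:Z ^+ 2 != 0 by rewrite expf_neq0 // eqz_nat -lt0n expn_gt0 prime_gt0.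
have pN_qform b : bilinear_form b ->
    padic_eq p (fun k => qform b (fun i => t i k)) (fun _ => 0) -> ((p ^ N)%:Z %| qform b u)%Z.
  move=> b_bil /(_ K); rewrite eqz_mod_dvd subr0 tKE qformZ // pKE dvdz_mul2l // => pN1.
  exact: dvdz_exp_leq pN1.
exists u; split; [exact: pN_qform q1_0 | exact: pN_qform q2_0 |].
exists i0; apply: contra t_i0 => p_u.
have := padic_coherent_dvd (coh i0) v.+1 (v + N).
rewrite (_ : (v.+1 + (v + N) = K)%N); last by rewrite /K; clear; lia.
have pv1_tK : ((p ^ v.+1)%:Z %| t i0 K)%Z.
  have -> : t i0 K = (p ^ v)%:Z * u i0 by rewrite /u mulrC divzK.
  by rewrite Posz_expnS mulrC dvdz_mul.
by rewrite rpredBl.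
Qed.

End QuadraticHensel.

Lemma dvdz_sq (p : nat) (x : int) : prime p -> (p%:Z %| x ^+ 2)%Z -> (p%:Z %| x)%Z.
Proof. by move=> p_pr; rewrite expr2 Euclid_dvdzM // orbb. Qed.

Section PrimitiveSolution.

Variables (D A B : int) (p l : nat).
Hypotheses (p_pr : prime p) (p_odd : p != 2%N)
  (pD : (p%:Z %| D)%Z) (p2D : ~~ ((p ^ 2)%:Z %| D)%Z) (l_gt0 : (0 < l)%N)
  (pA : ~~ ((p ^ l.+1)%:Z %| A)%Z) (pB : ~~ ((p ^ l.+1)%:Z %| B)%Z)
  (pAB : ~~ ((p ^ l.+1)%:Z %| A - B)%Z) (pG : ~~ ((p ^ l.+1)%:Z %| Gpoly A B)%Z).
Variables t0 t1 t2 t3 t4 : int.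
Hypotheses
  (pN_Q1 : ((p ^ (8 * l + 1))%:Z %| t2 ^+ 2 - D * t3 ^+ 2 - t0 * t1)%Z)
  (pN_Q2 : ((p ^ (8 * l + 1))%:Z %|
             t2 ^+ 2 - D * t4 ^+ 2 - (t0 + A * t1) * (t0 + B * t1))%Z).

(* By [jac_minors_S] below, the Jacobian minors of (Q1, Q2) at (t0, ..., t4) are
   [2 t2 Y], [2 t2 Y'], [2 E], [2 D t1 t4] and [- 2 D t3 X]. *)
Local Notation Y := (2 * t0 + (A + B - 1) * t1).
Local Notation Y' := ((A + B - 1) * t0 + 2 * A * B * t1).
Local Notation X := (2 * t0 + (A + B) * t1).
Local Notation E := (A * B * t1 ^+ 2 - t0 ^+ 2).

Lemma p_ndvd2 : ~~ (p%:Z %| 2)%Z.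
Proof.
rewrite dvdzE absz_nat; apply: contra p_odd => p2.
by rewrite eqn_leq (dvdn_leq _ p2) // prime_gt1.
Qed.

Lemma D_neq0 : D != 0.
Proof. exact: ndvdz_neq0 p2D. Qed.

Lemma logz_D : logz p D = 1%N.
Proof.
have := logz_lt p_pr D_neq0 p2D; have := pD.
by rewrite -{1}(expn1 p) dvdz_exp_logz ?D_neq0 //; clear; lia.
Qed.

Lemma dvdz_D_sq k z :
  ((p ^ k.+1)%:Z %| D * z)%Z -> ((p ^ (2 * k).+1)%:Z %| D * z ^+ 2)%Z.
Proof.
have [-> | z0] := eqVneq z 0; first by rewrite expr0n mulr0 dvdz0.
have z20 : z ^+ 2 != 0 by rewrite expf_neq0.
rewrite !dvdz_exp_logz ?mulf_neq0 ?D_neq0 // !logzM ?D_neq0 // logz_D.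
by clear; lia.
Qed.

Lemma Q1_mod_p : (p%:Z %| t2 ^+ 2 - t0 * t1)%Z.
Proof.
rewrite (_ : _ - _ = (t2 ^+ 2 - D * t3 ^+ 2 - t0 * t1) + t3 ^+ 2 * D); last by ring.
by rewrite rpredD ?dvdz_mull // (dvdz_exp_leq (j := 1) _ pN_Q1) //; clear; lia.
Qed.

Lemma Q2_mod_p : (p%:Z %| t2 ^+ 2 - (t0 + A * t1) * (t0 + B * t1))%Z.
Proof.
rewrite (_ : _ - _ = (t2 ^+ 2 - D * t4 ^+ 2 - (t0 + A * t1) * (t0 + B * t1)) + t4 ^+ 2 * D);
  last by ring.
by rewrite rpredD ?dvdz_mull // (dvdz_exp_leq (j := 1) _ pN_Q2) //; clear; lia.
Qed.

Lemma t0_unit_of_t2_unit : ~~ (p%:Z %| t2)%Z -> ~~ (p%:Z %| t0)%Z.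
Proof.
apply: contra => p_t0; apply: dvdz_sq => //.
rewrite (_ : t2 ^+ 2 = (t2 ^+ 2 - t0 * t1) + t1 * t0); last by ring.
by rewrite rpredD ?Q1_mod_p ?dvdz_mull.
Qed.

Lemma minors_t2_unit : ~~ (p%:Z %| t2)%Z ->
  ~~ [&& ((p ^ (4 * l + 1))%:Z %| 2 * t2 * Y)%Z & ((p ^ (4 * l + 1))%:Z %| 2 * t2 * Y')%Z].
Proof.
move=> p_t2; apply/negP => /andP[]; rewrite ![2 * t2 * _]mulrC.
have p_2t2 : ~~ (p%:Z %| 2 * t2)%Z by rewrite Euclid_dvdzM // negb_or p_ndvd2.
rewrite !Gauss_dvdz_exp // => pK_Y pK_Y'.
have : ((p ^ (4 * l + 1))%:Z %| Gpoly A B * t0)%Z.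
  rewrite (_ : _ * _ = (A + B - 1) * Y' - (2 * A * B) * Y); last by rewrite /Gpoly; ring.
  by rewrite rpredB ?dvdz_mull.
rewrite Gauss_dvdz_exp ?t0_unit_of_t2_unit // => pK_G.
by have /negP := pG; apply; apply: dvdz_exp_leq pK_G; clear; lia.
Qed.

Lemma t0_of_t2 : (p%:Z %| t2)%Z -> (p%:Z %| t0)%Z.
Proof.
move=> p_t2; have p_t2sq : (p%:Z %| t2 ^+ 2)%Z by rewrite dvdz_exp.
have : (p%:Z %| t0 * t1)%Z.
  rewrite (_ : _ * _ = t2 ^+ 2 - (t2 ^+ 2 - t0 * t1)); last by ring.
  by rewrite rpredB ?Q1_mod_p.
rewrite Euclid_dvdzM // => /orP[// | p_t1]; apply: dvdz_sq => //.
rewrite (_ : t0 ^+ 2 = t2 ^+ 2 - (t2 ^+ 2 - (t0 + A * t1) * (t0 + B * t1))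
                     - (A * t0 + B * t0 + A * B * t1) * t1); last by ring.
by rewrite rpredB ?dvdz_mull // rpredB ?Q2_mod_p.
Qed.

Lemma t1_unit_of_t2 :
  ~~ [&& (p%:Z %| t0)%Z, (p%:Z %| t1)%Z, (p%:Z %| t2)%Z, (p%:Z %| t3)%Z & (p%:Z %| t4)%Z] ->
  (p%:Z %| t2)%Z -> ~~ (p%:Z %| t1)%Z.
Proof.
move=> prim p_t2; apply: contra prim => p_t1; rewrite t0_of_t2 // p_t1 p_t2 /=.
have p2E : (p ^ 2)%:Z = p%:Z * p%:Z by rewrite -PoszM mulnn.
have p2_t2 : ((p ^ 2)%:Z %| t2 ^+ 2)%Z by rewrite p2E expr2 dvdz_mul.
have p2_sq z : ~~ (p%:Z %| z)%Z -> ~~ ((p ^ 2)%:Z %| D * z ^+ 2)%Z.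
  move=> p_z; have p_z2 : ~~ (p%:Z %| z ^+ 2)%Z by rewrite expr2 Euclid_dvdzM // orbb.
  by rewrite Gauss_dvdz_exp.
have p2_N : (2 <= 8 * l + 1)%N by move: l_gt0; clear; lia.
apply/andP; split; apply/negPn/negP => p_z; have /negP := p2_sq _ p_z; apply.
- have p2_Q : ((p ^ 2)%:Z %| t2 ^+ 2 - t0 * t1)%Z.
    by rewrite rpredB // p2E dvdz_mul // t0_of_t2.
  rewrite (_ : D * _ = t2 ^+ 2 - t0 * t1 - (t2 ^+ 2 - D * t3 ^+ 2 - t0 * t1)); last by ring.
  exact: rpredB p2_Q (dvdz_exp_leq p2_N pN_Q1).
- have p2_Q : ((p ^ 2)%:Z %| t2 ^+ 2 - (t0 + A * t1) * (t0 + B * t1))%Z.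
    by rewrite rpredB // p2E dvdz_mul // rpredD ?dvdz_mull ?t0_of_t2.
  rewrite (_ : D * _ = t2 ^+ 2 - (t0 + A * t1) * (t0 + B * t1)
           - (t2 ^+ 2 - D * t4 ^+ 2 - (t0 + A * t1) * (t0 + B * t1))); last by ring.
  exact: rpredB p2_Q (dvdz_exp_leq p2_N pN_Q2).
Qed.

Section UnitT1.

Hypotheses (p_t1 : ~~ (p%:Z %| t1)%Z) (pK_E : ((p ^ (4 * l + 1))%:Z %| E)%Z)
  (pN_Dt4 : ((p ^ (8 * l + 1))%:Z %| D * t4 ^+ 2)%Z).

Lemma ABt1_neq0 : A * B * t1 ^+ 2 != 0.
Proof. by rewrite !mulf_neq0 ?expf_neq0 // (ndvdz_neq0 pA, ndvdz_neq0 pB, ndvdz_neq0 p_t1). Qed.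

Lemma logz_ABt1 : (logz p (A * B * t1 ^+ 2) <= 2 * l)%N.
Proof.
have := logz_lt p_pr (ndvdz_neq0 pA) pA; have := logz_lt p_pr (ndvdz_neq0 pB) pB.
rewrite !logzM ?mulf_neq0 ?expf_neq0 ?(ndvdz_neq0 pA, ndvdz_neq0 pB, ndvdz_neq0 p_t1) //.
by rewrite (logz_coprime p_pr p_t1); clear; lia.
Qed.

Lemma t0_neq0 : t0 != 0.
Proof.
apply: contraTneq pK_E => ->; rewrite expr0n subr0 dvdz_exp_logz ?ABt1_neq0 // -ltnNge.
by have := logz_ABt1; clear; lia.
Qed.

Lemma logz_t0 : (logz p t0 <= l)%N.
Proof.
have vK : (logz p (A * B * t1 ^+ 2) < 4 * l + 1)%N by have := logz_ABt1; clear; lia.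
have pK_nE : ((p ^ (4 * l + 1))%:Z %| - E)%Z by rewrite rpredN.
have := logzDr p_pr ABt1_neq0 vK pK_nE.
rewrite (_ : A * B * t1 ^+ 2 + - E = t0 ^+ 2); last by ring.
by rewrite logzX; have := logz_ABt1; clear; lia.
Qed.

Lemma Dt3_congr_t0Y : ((p ^ (4 * l + 1))%:Z %| D * t3 ^+ 2 - t0 * Y)%Z.
Proof.
have le_KN : (4 * l + 1 <= 8 * l + 1)%N by clear; lia.
rewrite (_ : _ - _ = (t2 ^+ 2 - D * t4 ^+ 2 - (t0 + A * t1) * (t0 + B * t1))
    - (t2 ^+ 2 - D * t3 ^+ 2 - t0 * t1) + D * t4 ^+ 2 + E); last by ring.
exact: rpredD (rpredD (rpredB (dvdz_exp_leq le_KN pN_Q2) (dvdz_exp_leq le_KN pN_Q1))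
  (dvdz_exp_leq le_KN pN_Dt4)) pK_E.
Qed.

Lemma X_ndvd : ~~ ((p ^ (2 * l + 1))%:Z %| X)%Z.
Proof.
have pAB_sq : ~~ ((p ^ (2 * l + 1))%:Z %| (A - B) ^+ 2 * t1 ^+ 2)%Z.
  have AB0 := ndvdz_neq0 pAB; have t10 := ndvdz_neq0 p_t1.
  rewrite dvdz_exp_logz ?mulf_neq0 ?expf_neq0 // logzM ?expf_neq0 //.
  rewrite !logzX (logz_coprime p_pr p_t1) -ltnNge.
  by have := logz_lt p_pr AB0 pAB; clear; lia.
apply: contra pAB_sq => pX.
have pX_E : ((p ^ (2 * l + 1))%:Z %| E)%Z by apply: dvdz_exp_leq pK_E; clear; lia.
rewrite (_ : _ * _ = - 4 * E - X * (X - 2 * (A + B) * t1)); last by ring.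
exact: rpredB (dvdz_mull _ pX_E) (dvdz_mulr _ pX).
Qed.

Section UnitY.

Hypothesis p_Y : ~~ (p%:Z %| Y)%Z.

Lemma logz_t0Y : logz p (t0 * Y) = logz p t0.
Proof. by rewrite logzM ?t0_neq0 ?(ndvdz_neq0 p_Y) // (logz_coprime p_pr p_Y) addn0. Qed.

Lemma t3_neq0 : t3 != 0.
Proof.
apply: contraTneq Dt3_congr_t0Y => ->; rewrite expr0n mulr0 sub0r rpredN.
rewrite dvdz_exp_logz ?mulf_neq0 ?t0_neq0 ?(ndvdz_neq0 p_Y) // -ltnNge logz_t0Y.
by have := logz_t0; clear; lia.
Qed.

Lemma logz_t3 : (logz p t3).*2.+1 = logz p t0.
Proof.
have vK : (logz p (t0 * Y) < 4 * l + 1)%N by rewrite logz_t0Y; have := logz_t0; clear; lia.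
have := logzDr p_pr (mulf_neq0 t0_neq0 (ndvdz_neq0 p_Y)) vK Dt3_congr_t0Y.
rewrite (_ : t0 * Y + (D * t3 ^+ 2 - t0 * Y) = D * t3 ^+ 2); last by ring.
by rewrite logzM ?expf_neq0 ?D_neq0 ?t3_neq0 // logz_D logzX logz_t0Y -mul2n.
Qed.

End UnitY.

Lemma minor03_X_nonunit : (p%:Z %| X)%Z -> ~~ ((p ^ (4 * l + 1))%:Z %| 2 * D * t3 * X)%Z.
Proof.
move=> p_X; have p_Y : ~~ (p%:Z %| Y)%Z.
  apply: contra p_t1 => p_Y; rewrite (_ : t1 = X - Y); last by ring.
  exact: rpredB.
have X0 := ndvdz_neq0 X_ndvd; have t30 := t3_neq0 p_Y.
have := logz_lt p_pr X0 X_ndvd; have := logz_t3 p_Y; have := logz_t0.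
rewrite dvdz_exp_logz ?mulf_neq0 ?D_neq0 // !logzM ?mulf_neq0 ?D_neq0 //.
by rewrite (logz_coprime p_pr p_ndvd2) logz_D -!muln2; clear; lia.
Qed.

Lemma minor03_X_unit : ~~ (p%:Z %| X)%Z -> ~~ ((p ^ (4 * l + 1))%:Z %| 2 * D * t3 * X)%Z.
Proof.
move=> p_X; apply/negP; rewrite (_ : _ * _ = D * t3 * (2 * X)); last by ring.
rewrite (Gauss_dvdz_exp p_pr); last by rewrite Euclid_dvdzM // negb_or p_ndvd2.
rewrite (_ : (4 * l + 1 = (4 * l).+1)%N); last by clear; lia.
move=> /dvdz_D_sq pN_Dt3.
have pK_t0Y : ((p ^ (4 * l + 1))%:Z %| t0 * Y)%Z.
  have pK_Dt3 : ((p ^ (4 * l + 1))%:Z %| D * t3 ^+ 2)%Z.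
    by apply: dvdz_exp_leq pN_Dt3; clear; lia.
  rewrite (_ : t0 * Y = D * t3 ^+ 2 - (D * t3 ^+ 2 - t0 * Y)); last by ring.
  exact: rpredB pK_Dt3 Dt3_congr_t0Y.
have pl_Y : ((p ^ l.+1)%:Z %| Y)%Z.
  have [-> | Y0] := eqVneq Y 0; first exact: dvdz0.
  move: pK_t0Y; rewrite !dvdz_exp_logz ?mulf_neq0 ?t0_neq0 // logzM ?t0_neq0 //.
  by have := logz_t0; clear; lia.
have /negP := pG; apply.
have p_t1sq : ~~ (p%:Z %| t1 ^+ 2)%Z by rewrite expr2 Euclid_dvdzM // orbb.
have pl_E : ((p ^ l.+1)%:Z %| E)%Z by apply: dvdz_exp_leq pK_E; clear; lia.
rewrite -(Gauss_dvdz_exp p_pr _ _ p_t1sq).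
rewrite (_ : Gpoly A B * t1 ^+ 2 = - 4 * E - Y * (Y - 2 * (A + B - 1) * t1)); last first.
  by rewrite /Gpoly; ring.
exact: rpredB (dvdz_mull _ pl_E) (dvdz_mulr _ pl_Y).
Qed.

End UnitT1.

Lemma minors_t1_unit : ~~ (p%:Z %| t1)%Z ->
  ~~ [&& ((p ^ (4 * l + 1))%:Z %| 2 * A * B * t1 ^+ 2 - 2 * t0 ^+ 2)%Z,
         ((p ^ (4 * l + 1))%:Z %| 2 * D * t1 * t4)%Z &
         ((p ^ (4 * l + 1))%:Z %| 2 * D * t3 * X)%Z].
Proof.
move=> p_t1; apply/and3P => -[pK_m01 pK_m04 pK_m03].
have pK_E : ((p ^ (4 * l + 1))%:Z %| E)%Z.
  rewrite -(Gauss_dvdz_exp p_pr _ _ p_ndvd2).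
  by rewrite (_ : E * 2 = 2 * A * B * t1 ^+ 2 - 2 * t0 ^+ 2) //; ring.
have pN_Dt4 : ((p ^ (8 * l + 1))%:Z %| D * t4 ^+ 2)%Z.
  have p_2t1 : ~~ (p%:Z %| 2 * t1)%Z by rewrite Euclid_dvdzM // negb_or p_ndvd2.
  rewrite (_ : (8 * l + 1 = (2 * (4 * l)).+1)%N); last by clear; lia.
  apply: dvdz_D_sq; rewrite -(Gauss_dvdz_exp p_pr _ _ p_2t1).
  rewrite (_ : ((4 * l).+1 = 4 * l + 1)%N); last by clear; lia.
  by rewrite (_ : D * t4 * (2 * t1) = 2 * D * t1 * t4) //; ring.
have [p_X | p_X] := boolP (p%:Z %| X)%Z.
- by have /negP := minor03_X_nonunit p_t1 pK_E pN_Dt4 p_X.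
- by have /negP := minor03_X_unit p_t1 pK_E pN_Dt4 p_X.
Qed.

Lemma primitive_minors_ndvd :
  ~~ [&& (p%:Z %| t0)%Z, (p%:Z %| t1)%Z, (p%:Z %| t2)%Z, (p%:Z %| t3)%Z & (p%:Z %| t4)%Z] ->
  ~~ [&& ((p ^ (4 * l + 1))%:Z %| 2 * t2 * Y)%Z,
         ((p ^ (4 * l + 1))%:Z %| 2 * t2 * Y')%Z,
         ((p ^ (4 * l + 1))%:Z %| 2 * A * B * t1 ^+ 2 - 2 * t0 ^+ 2)%Z,
         ((p ^ (4 * l + 1))%:Z %| 2 * D * t1 * t4)%Z &
         ((p ^ (4 * l + 1))%:Z %| 2 * D * t3 * X)%Z].
Proof.
move=> prim; have [p_t2 | p_t2] := boolP (p%:Z %| t2)%Z.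
- have := minors_t1_unit (t1_unit_of_t2 prim p_t2).
  by apply: contra => /and5P[_ _ -> -> ->].
- have := minors_t2_unit p_t2.
  by apply: contra => /and5P[-> -> _ _ _].
Qed.

End PrimitiveSolution.

Definition Q1_bilin (D : int) (t h : 'I_5 -> int) : int :=
  t (inord 2) * h (inord 2) - D * t (inord 3) * h (inord 3) - t (inord 0) * h (inord 1).

Definition Q2_bilin (D A B : int) (t h : 'I_5 -> int) : int :=
  t (inord 2) * h (inord 2) - D * t (inord 4) * h (inord 4)
  - (t (inord 0) + A * t (inord 1)) * (h (inord 0) + B * h (inord 1)).

Lemma Q1_bilinear D : bilinear_form (Q1_bilin D).
Proof. by split=> *; rewrite /Q1_bilin; ring. Qed.

Lemma Q2_bilinear D A B : bilinear_form (Q2_bilin D A B).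
Proof. by split=> *; rewrite /Q2_bilin; ring. Qed.

Lemma Q1E D t : Q1 D t = qform (Q1_bilin D) t.
Proof. by rewrite /Q1 /qform /Q1_bilin; ring. Qed.

Lemma Q2E D A B t : Q2 D A B t = qform (Q2_bilin D A B) t.
Proof. by rewrite /Q2 /qform /Q2_bilin; ring. Qed.

Lemma inord5_eq (a b : nat) :
  (a < 5)%N -> (b < 5)%N -> ((inord a : 'I_5) == inord b) = (a == b).
Proof. by move=> a5 b5; rewrite -val_eqE /= !inordK. Qed.

Lemma jac_minors_S D A B (t : 'I_5 -> int)
    (minor := jac_minor (Q1_bilin D) (Q2_bilin D A B) t) :
  [/\ minor (inord 0) (inord 2) = 2 * t (inord 2) * (2 * t (inord 0) + (A + B - 1) * t (inord 1)),
      minor (inord 1) (inord 2) =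
        2 * t (inord 2) * ((A + B - 1) * t (inord 0) + 2 * A * B * t (inord 1)),
      minor (inord 0) (inord 1) = 2 * A * B * t (inord 1) ^+ 2 - 2 * t (inord 0) ^+ 2,
      minor (inord 0) (inord 4) = 2 * D * t (inord 1) * t (inord 4)
    & minor (inord 0) (inord 3) =
        - (2 * D * t (inord 3) * (2 * t (inord 0) + (A + B) * t (inord 1)))].
Proof.
by rewrite /minor /jac_minor /jac /Q1_bilin /Q2_bilin /delta !inord5_eq //=; split; ring.
Qed.

Lemma primitive_solution_of_S_point p D A B N : prime p -> S_has_Qp_point p D A B ->
  exists u : 'I_5 -> int,
    [/\ ((p ^ N)%:Z %| Q1 D u)%Z, ((p ^ N)%:Z %| Q2 D A B u)%Z & exists i, ~~ (p%:Z %| u i)%Z].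
Proof.
move=> p_pr [t [coh t_neq0 Q1_0 Q2_0]].
have Q1_0' : padic_eq p (fun k => qform (Q1_bilin D) (fun i => t i k)) (fun _ => 0).
  by move=> k; rewrite -Q1E; exact: Q1_0.
have Q2_0' : padic_eq p (fun k => qform (Q2_bilin D A B) (fun i => t i k)) (fun _ => 0).
  by move=> k; rewrite -Q2E; exact: Q2_0.
have [u [pN_Q1 pN_Q2 u_prim]] := qpoint_primitive_approx p_pr (Q1_bilinear D)
  (Q2_bilinear D A B) N coh t_neq0 Q1_0' Q2_0'.
by exists u; rewrite Q1E Q2E.
Qed.

Section LiftingPrimitiveSolutions.

Variables (D A B : int) (p l : nat).
Hypotheses (p_pr : prime p) (p_odd : p != 2%N)
  (pD : (p%:Z %| D)%Z) (p2D : ~~ ((p ^ 2)%:Z %| D)%Z) (l_gt0 : (0 < l)%N)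
  (pA : ~~ ((p ^ l.+1)%:Z %| A)%Z) (pB : ~~ ((p ^ l.+1)%:Z %| B)%Z)
  (pAB : ~~ ((p ^ l.+1)%:Z %| A - B)%Z) (pG : ~~ ((p ^ l.+1)%:Z %| Gpoly A B)%Z).
Variable t : 'I_5 -> int.
Hypotheses (pN_Q1 : ((p ^ (8 * l + 1))%:Z %| Q1 D t)%Z)
  (pN_Q2 : ((p ^ (8 * l + 1))%:Z %| Q2 D A B t)%Z) (t_prim : exists i, ~~ (p%:Z %| t i)%Z).

Lemma primitive_solution_nonsingular : exists c1 c2,
  ~~ ((p ^ (4 * l + 1))%:Z %| jac_minor (Q1_bilin D) (Q2_bilin D A B) t c1 c2)%Z.
Proof.
have [[c1 c2] /= | all_minors] :=
  pickP (fun c => ~~ ((p ^ (4 * l + 1))%:Z %| jac_minor (Q1_bilin D) (Q2_bilin D A B) t c.1 c.2)%Z).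
  by exists c1, c2.
have prim : ~~ [&& (p%:Z %| t (inord 0))%Z, (p%:Z %| t (inord 1))%Z, (p%:Z %| t (inord 2))%Z,
                   (p%:Z %| t (inord 3))%Z & (p%:Z %| t (inord 4))%Z].
  case: t_prim => i; apply: contra => /and5P[p_t0 p_t1 p_t2 p_t3 p_t4].
  by rewrite -(inord_val i); case: i => [[|[|[|[|[|k]]]]] ?].
have := primitive_minors_ndvd p_pr p_odd pD p2D l_gt0 pA pB pAB pG pN_Q1 pN_Q2 prim.
have [<- <- <- <- m03] := jac_minors_S D A B t.
rewrite -[(_ %| 2 * D * _ * _)%Z]rpredN -m03.
by rewrite !(negbFE (all_minors (_, _))).
Qed.

Lemma S_point_of_primitive_solution : S_has_Qp_point p D A B.
Proof.
have [c1 [c2 pK_m]] := primitive_solution_nonsingular.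
set m := jac_minor _ _ t c1 c2 in pK_m.
have m0 := ndvdz_neq0 pK_m.
have pe_m : ((p ^ logz p m)%:Z %| m)%Z by rewrite dvdz_exp_logz.
have pe1_m : ~~ ((p ^ (logz p m).+1)%:Z %| m)%Z by rewrite dvdz_exp_logz // ltnn.
have eN : (2 * logz p m < 8 * l + 1)%N by have := logz_lt p_pr m0 pK_m; clear; lia.
have pN_q1 : ((p ^ (8 * l + 1))%:Z %| qform (Q1_bilin D) t)%Z by rewrite -Q1E.
have pN_q2 : ((p ^ (8 * l + 1))%:Z %| qform (Q2_bilin D A B) t)%Z by rewrite -Q2E.
have [s [coh s_t q1_0 q2_0]] :=
  quadratic_hensel p_pr (Q1_bilinear D) (Q2_bilinear D A B) eN pN_q1 pN_q2 pe_m pe1_m.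
exists s; split=> //.
- case: t_prim => i p_ti; exists i => /(_ 1%N); rewrite eqz_mod_dvd subr0 expn1 => p_si.
  move/negP: p_ti; apply; rewrite (_ : t i = s i 1%N - (s i 1%N - t i)); last by ring.
  exact: rpredB p_si (s_t i).
- by move=> k; rewrite Q1E; exact: q1_0.
- by move=> k; rewrite Q2E; exact: q2_0.
Qed.

End LiftingPrimitiveSolutions.

Lemma dvdz_modz_sub M x : (M %| (x %% M)%Z - x)%Z.
Proof.
have -> : (x %% M)%Z - x = - ((x %/ M)%Z * M) by rewrite {2}(divz_eq x M); ring.
by rewrite rpredN dvdz_mull.
Qed.

Lemma dvdz_congr q M x x' : (q %| M)%Z -> (M %| x' - x)%Z -> (q %| x')%Z = (q %| x)%Z.
Proof.
move=> qM /(dvdz_trans qM) q_x'x.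
by rewrite -{1}(subrK x x') rpredDl.
Qed.

Lemma Gpoly_congr M A A' B B' :
  (M %| A' - A)%Z -> (M %| B' - B)%Z -> (M %| Gpoly A' B' - Gpoly A B)%Z.
Proof.
move=> MA MB.
rewrite (_ : _ - _ = (A' - A) * (A' + A - 2 * B' - 2) + (B' - B) * (B' + B - 2 * A - 2));
  last by rewrite /Gpoly; ring.
by rewrite rpredD ?dvdz_mulr.
Qed.

Lemma Q2_congr D M A A' B B' t :
  (M %| A' - A)%Z -> (M %| B' - B)%Z -> (M %| Q2 D A' B' t - Q2 D A B t)%Z.
Proof.
move=> MA MB.
rewrite (_ : _ - _ = (A - A') * (t (inord 0) * t (inord 1) + B' * t (inord 1) ^+ 2)
    + (B - B') * (t (inord 0) * t (inord 1) + A * t (inord 1) ^+ 2)); last by rewrite /Q2; ring.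
by rewrite rpredD ?dvdz_mulr // -opprB rpredN.
Qed.

Theorem lemma2p4 (D : int) (p l : nat) (A B : int) :
  ~ (exists r : int, D = r ^+ 2) ->
  prime p -> p != 2%N ->
  (p%:Z %| D)%Z -> ~~ ((p ^ 2)%:Z %| D)%Z ->
  (1 <= l)%N ->
  ~~ ((p ^ l.+1)%:Z %| A)%Z -> ~~ ((p ^ l.+1)%:Z %| B)%Z ->
  ~~ ((p ^ l.+1)%:Z %| A - B)%Z -> ~~ ((p ^ l.+1)%:Z %| Gpoly A B)%Z ->
  (S_has_Qp_point p D A B <->
   in_Rl D p l (A %% (p ^ (8 * l + 1))%:Z)%Z (B %% (p ^ (8 * l + 1))%:Z)%Z).
Proof.
move=> _ p_pr p_odd pD p2D l_gt0 pA pB pAB pG.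
set M := (p ^ (8 * l + 1))%:Z.
have MA := dvdz_modz_sub M A; have MB := dvdz_modz_sub M B.
have qM : ((p ^ l.+1)%:Z %| M)%Z by apply: dvdz_exp_leq (dvdzz _); clear; lia.
have MAB : (M %| ((A %% M)%Z - (B %% M)%Z) - (A - B))%Z.
  rewrite (_ : _ - _ = ((A %% M)%Z - A) - ((B %% M)%Z - B)); last by ring.
  exact: rpredB.
have MQ2 t := Q2_congr D t MA MB.
split=> [S_pt | [_ _ _ _ [t [pN_Q1 pN_Q2 t_prim]]]].
- have [u [pN_Q1 pN_Q2 u_prim]] := primitive_solution_of_S_point (8 * l + 1) p_pr S_pt.
  split; rewrite ?(dvdz_congr qM MA) ?(dvdz_congr qM MB) ?(dvdz_congr qM MAB)
    ?(dvdz_congr qM (Gpoly_congr MA MB)) //.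
  by exists u; rewrite (dvdz_congr (dvdzz M) (MQ2 u)).
- rewrite (dvdz_congr (dvdzz M) (MQ2 t)) in pN_Q2.
  by apply: (S_point_of_primitive_solution p_pr p_odd pD p2D l_gt0 pA pB pAB pG pN_Q1).
Qed.
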